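(* Consider a GND instance, a reply $\varrho$-oracle ($\varrho\ge1$), and a cost sharing mechanism $M$ whose induced GND game admits an $(A,B)$-bounded potential function $\Phi$ and is $(\lambda,\mu)$-smooth with $\mu < 1/(\varrho\epsilon_1^2)$, where $\epsilon_1=\frac{1+\epsilon}{1-\epsilon}$. Let $Q = \frac{2\epsilon_1 N A}{1-\varrho\epsilon_1^2\mu}$ and $T = \lceil Q \cdot \ln(A B N^{\max_j \alpha_j}) \rceil$. Then the output $p^{t^*}$ of Alg-ABRD (run with $M$, the given $\epsilon$-cost shares and this $T$) satisfies $$C(p^{t^*}) \le \frac{2\varrho\epsilon_1^2\lambda}{1-\varrho\epsilon_1^2\mu}\cdot C^*.$$
   Context: GND instance: finite resource set $E$; requests $i \in [N]$, each with a reply collection $P_i \subseteq 2^E$ and a weight vector $w_i \in \mathbb{Z}_{\geq 1}^E$; constants $q \in \mathbb{Z}_{\ge 1}$, $\alpha_1,\dots,\alpha_q > 1$; for each $e$, $\sigma_e \geq 0$ and $\xi_{e,j} \geq 0$ (at least one $\xi_{e,j}>0$), and cost function $F_e(0)=0$, $F_e(l)=\sigma_e+\sum_j \xi_{e,j} l^{\alpha_j}$ for $l>0$. A strategy profile is $p=(p_1,\dots,p_N)\in P = P_1\times\dots\times P_N$; load $l_e^p=\sum_{i: e\in p_i} w_i(e)$; total cost $C(p)=\sum_e F_e(l_e^p)$; $C^*=\min_{p\in P} C(p)$. Notation $p_{-i}$ denotes $p$ without coordinate $i$ and $(p'_i,p_{-i})$ replaces the $i$-th coordinate by $p'_i$.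 A reply $\varrho$-oracle, given a reply collection $R$ and tolls $\tau:E\to\mathbb{R}_{>0}$, returns $r \in R$ with $\sum_{e\in r}\tau(e) \le \varrho \sum_{e \in r'}\tau(e)$ for all $r'\in R$. A cost sharing mechanism (CSM) $M=\{f_{i,e}\}$ assigns cost shares $f_{i,e}(p) \geq 0$ with $\sum_i f_{i,e}(p) = F_e(l_e^p)$; it is separable and uniform: $f_{i,e}(p)=0$ if $e \notin p_i$, and $f_{i,e}(p)$ depends only on $w_i(e)$ and the multiset of weights $w_{i'}(e)$ of the other players $i'$ with $e \in p_{i'}$. Player $i$'s individual cost is $C_i(p)=\sum_e f_{i,e}(p)$. The induced game is $(\lambda,\mu)$-smooth ($\lambda>0$, $0<\mu<1$) if $\sum_i C_i(p'_i,p_{-i}) \le \lambda C(p') + \mu C(p)$ for all $p,p'\in P$. A function $\Phi:P\to\mathbb{R}_{>0}$ is a potential function if $\Phi(p')-\Phi(p)=C_i(p')-C_i(p)$ whenever $p_{-i}=p'_{-i}$; it is $(A,B)$-bounded ($A,B\ge1$) if $\Phi(p)/A \le C(p) \le B\,\Phi(p)$ for all $p$. Alg-ABRD: fix small $\epsilon>0$. Assume values $\widetilde f_{i,e}(p)$ are fixed for all $i,e,p$ with $(1-\epsilon) f_{i,e}(p) \le \widetilde f_{i,e}(p) \le (1+\epsilon) f_{i,e}(p)$, and set $\widetilde C_i(p)=\sum_e \widetilde f_{i,e}(p)$. Initial profile $p^0$: for each $i$, $p^0_i$ is the oracle's output on $P_i$ with tolls $\tau_i^0(e)=F_e(w_i(e))$.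 For $t=1,\dots,T$: for every $i$ compute $p'_i \in P_i$ with $\widetilde C_i(p'_i,p^{t-1}_{-i}) \le \varrho\, \widetilde C_i(p''_i,p^{t-1}_{-i})$ for all $p''_i\in P_i$, and let $\delta_i^t=\widetilde C_i(p^{t-1}) - \epsilon_1 \widetilde C_i(p'_i,p^{t-1}_{-i})$. If $\delta_i^t \le 0$ for all $i$, set $p^t=p^{t-1}$ and stop. Otherwise let $\Delta^t=\sum_i \delta_i^t$, pick $j$ with $\delta_j^t>0$ and $\delta_j^t \ge \Delta^t/N$, and set $p^t=(p'_j,p^{t-1}_{-j})$. Finally output a generated profile $p^{t^*}$ of minimum total cost $C$. *)

From HB Require Import structures.
From mathcomp Require Import all_boot all_order all_algebra.
From mathcomp Require Import all_classical all_reals all_analysis.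
Set Implicit Arguments. Unset Strict Implicit. Unset Printing Implicit Defensive.
Import Order.TTheory GRing.Theory Num.Theory.
Local Open Scope ring_scope.

Section GND.
Variables (R : realType) (E : finType) (N : nat).

Definition profile := {ffun 'I_N -> {set E}}.

Definition valid (P : 'I_N -> {set {set E}}) (p : profile) : Prop :=
  forall i, p i \in P i.

Definition upd (p : profile) (i : 'I_N) (r : {set E}) : profile :=
  [ffun k => if k == i then r else p k].

Definition load (w : 'I_N -> E -> nat) (p : profile) (e : E) : nat :=
  (\sum_(i < N | e \in p i) w i e)%N.

Definition Fcost (q : nat) (alpha : 'I_q -> R) (sigma : E -> R)
  (xi : E -> 'I_q -> R) (e : E) (l : nat) : R :=
  if l == 0%N then 0 else sigma e + \sum_(j < q) xi e j * ((l%:R : R) `^ alpha j).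

Definition Ctot (q : nat) (alpha : 'I_q -> R) (sigma : E -> R)
  (xi : E -> 'I_q -> R) (w : 'I_N -> E -> nat) (p : profile) : R :=
  \sum_(e : E) Fcost alpha sigma xi e (load w p e).

Definition Cind (f : 'I_N -> E -> profile -> R) (i : 'I_N) (p : profile) : R :=
  \sum_(e : E) f i e p.

(* multiset (as a sequence, compared up to permutation) of the weights on e of
   the players other than i using e *)
Definition others_weights (w : 'I_N -> E -> nat) (p : profile) (i : 'I_N) (e : E)
  : seq nat :=
  [seq w k e | k <- enum 'I_N & (k != i) && (e \in p k)].

Definition is_CSM (P : 'I_N -> {set {set E}}) (w : 'I_N -> E -> nat)
  (F : E -> nat -> R) (f : 'I_N -> E -> profile -> R) : Prop :=
  [/\ (forall i e p, valid P p -> 0 <= f i e p),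
      (forall e p, valid P p -> \sum_(i < N) f i e p = F e (load w p e)),
      (forall i e p, valid P p -> e \notin p i -> f i e p = 0) &
      (forall i i' e p p', valid P p -> valid P p' ->
         e \in p i -> e \in p' i' -> w i e = w i' e ->
         perm_eq (others_weights w p i e) (others_weights w p' i' e) ->
         f i e p = f i' e p')].

Definition smooth (P : 'I_N -> {set {set E}}) (C : profile -> R)
  (f : 'I_N -> E -> profile -> R) (lam mu : R) : Prop :=
  forall p p', valid P p -> valid P p' ->
    \sum_(i < N) Cind f i (upd p i (p' i)) <= lam * C p' + mu * C p.

Definition is_potential (P : 'I_N -> {set {set E}})
  (f : 'I_N -> E -> profile -> R) (Phi : profile -> R) : Prop :=
  (forall p, valid P p -> 0 < Phi p) /\
  (forall i p p', valid P p -> valid P p' ->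
     (forall k, k != i -> p k = p' k) ->
     Phi p' - Phi p = Cind f i p' - Cind f i p).

Definition bounded_potential (P : 'I_N -> {set {set E}}) (C : profile -> R)
  (Phi : profile -> R) (A B : R) : Prop :=
  1 <= A /\ 1 <= B /\
  forall p, valid P p -> Phi p / A <= C p /\ C p <= B * Phi p.

(* a run of Alg-ABRD with T rounds: profiles ps 0, ps 1, ..., ps tend are the
   generated profiles; br t i is the rho-approximate best response p'_i
   computed in round t+1 against ps t. *)
Definition ABRD_run (P : 'I_N -> {set {set E}}) (w : 'I_N -> E -> nat)
  (F : E -> nat -> R) (ft : 'I_N -> E -> profile -> R) (rho eps1 : R) (T : nat)
  (ps : nat -> profile) (br : nat -> 'I_N -> {set E}) (tend : nat) : Prop :=
  let delta t i := Cind ft i (ps t) - eps1 * Cind ft i (upd (ps t) i (br t i)) in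
  [/\ (* initial profile: oracle outputs with tolls tau_i^0(e) = F_e(w_i(e)) *)
      (forall i, ps 0%N i \in P i /\
         forall r, r \in P i ->
           \sum_(e in ps 0%N i) F e (w i e) <= rho * \sum_(e in r) F e (w i e)),
      (tend <= T)%N,
      (forall t, (t < tend)%N ->
         (forall i, br t i \in P i /\
                forall r, r \in P i ->
                  Cind ft i (upd (ps t) i (br t i)) <= rho * Cind ft i (upd (ps t) i r)) /\
             ((exists j, [/\ 0 < delta t j,
                             (\sum_(i < N) delta t i) / N%:R <= delta t j &
                             ps t.+1 = upd (ps t) j (br t j)])
              \/ ((forall i, delta t i <= 0) /\ ps t.+1 = ps t /\ t.+1 = tend))) &
      (* early termination happens only through the stopping rule *)
      ((tend < T)%N -> exists t, t.+1 = tend /\ forall i, delta t i <= 0)].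

End GND.

(* While the current profile p is far from optimal, i.e. 2 rho eps1^2 lam C(pstar) < K C(p)
   with K = 1 - rho eps1^2 mu, smoothness makes the total approximate improvement
   Delta = sum_i delta_i at least (1 - eps) K C(p) / 2.  The chosen player j has
   delta_j >= Delta / N, and through the potential Phi drops by at least Phi(p) / Q.
   So a run that stays far from optimal never stops early, and after
   T >= Q ln(A B N^amax) rounds Phi has shrunk by the factor (1 - 1/Q)^T <= 1 / (A B N^amax).
   The power-mean inequality puts the initial oracle profile within rho N^amax of
   C(pstar), and the bounds Phi <= A C and C <= B Phi absorb A and B, so the last profile
   costs at most rho C(pstar): it is not far from optimal after all. *)

From HB Require Import structures.
From mathcomp Require Import all_boot all_order all_algebra.
From mathcomp Require Import all_classical all_reals all_analysis.
From mathcomp Require Import ring lra.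
Import Order.TTheory GRing.Theory Num.Theory.
Local Open Scope ring_scope.

Section PowerMean.
Context {R : realType}.

Lemma powR_mean_le (I : Type) (s : seq I) (g : I -> R) (p : R) :
  1 <= p -> (forall i, 0 <= g i) ->
  ((size s)%:R^-1 * \sum_(i <- s) g i) `^ p <=
    (size s)%:R^-1 * \sum_(i <- s) g i `^ p.
Proof.
move=> p_ge1 g_ge0; have p_gt0 : 0 < p by apply: lt_le_trans p_ge1.
elim: s => [|x s IH]; first by rewrite !big_nil !mulr0 powR0 ?gt_eqF.
case: s IH => [|y s] IH; first by rewrite !big_cons !big_nil !addr0 invr1 !mul1r.
rewrite [\sum_(i <- _ :: _) g i]big_cons [\sum_(i <- _ :: _) g i `^ p]big_cons.
set S := \sum_(i <- y :: s) g i; set Sp := \sum_(i <- y :: s) g i `^ p.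
set n : R := (size (y :: s))%:R; have n_gt0 : 0 < n by rewrite ltr0n.
set t : R := (n + 1)^-1.
have t_ge0 : 0 <= t by rewrite invr_ge0 addr_ge0.
have t_le1 : t <= 1 by rewrite invf_le1 ?lerDr ?addr_gt0.
have S_ge0 : 0 <= n^-1 * S.
  by apply: mulr_ge0; [rewrite invr_ge0 ltW | apply: sumr_ge0].
have -> : (size [:: x, y & s])%:R = n + 1 by rewrite /n /= -natr1.
(* The mean over x :: s is the convex combination, with weight t, of g x and the mean over s. *)
have -> : t * (g x + S) = t * g x + (1 - t) * (n^-1 * S).
  by rewrite /t; field; rewrite !gt_eqF ?addr_gt0.
have := convex_powR p_ge1 (Itv01 t_ge0 t_le1) (x:=g x) (y:=n^-1 * S).
rewrite !inE /= !in_itv /= !andbT !convRE => /(_ (g_ge0 x) S_ge0) /le_trans; apply.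
have -> : t * (g x `^ p + Sp) = t * g x `^ p + (1 - t) * (n^-1 * Sp).
  by rewrite /t; field; rewrite !gt_eqF ?addr_gt0.
by rewrite lerD2l ler_wpM2l ?subr_ge0.
Qed.

Lemma powR_sum_le (I : Type) (s : seq I) (g : I -> R) (p : R) :
  1 <= p -> (forall i, 0 <= g i) ->
  (\sum_(i <- s) g i) `^ p <= (size s)%:R `^ (p - 1) * \sum_(i <- s) g i `^ p.
Proof.
move=> p_ge1 g_ge0; have p_gt0 : 0 < p by apply: lt_le_trans p_ge1.
case: s => [|x s]; first by rewrite !big_nil powR0 ?gt_eqF ?mulr0.
set n : R := (size (x :: s))%:R; have n_gt0 : 0 < n by rewrite ltr0n.
set m := n^-1 * \sum_(i <- x :: s) g i.
have m_ge0 : 0 <= m by apply: mulr_ge0; [rewrite invr_ge0 ltW | apply: sumr_ge0].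
have -> : \sum_(i <- x :: s) g i = n * m by rewrite mulrA mulfV ?gt_eqF ?mul1r.
have -> : (n * m) `^ p = n `^ (p - 1) * (n * m `^ p).
  by rewrite powRM ?(ltW n_gt0) // -(mulr_powRB1 (ltW n_gt0) p_gt0); ring.
apply: ler_wpM2l; first exact: powR_ge0.
have mean_le := @powR_mean_le _ (x :: s) g p p_ge1 g_ge0.
rewrite -/n -/m in mean_le.
by have := ler_wpM2l (ltW n_gt0) mean_le; rewrite mulrA mulfV ?gt_eqF // mul1r.
Qed.

Lemma powR_sum_ord_le (n : nat) (P : pred 'I_n) (g : 'I_n -> R) (p : R) :
  1 <= p -> (forall i, 0 <= g i) ->
  (\sum_(i < n | P i) g i) `^ p <= n%:R `^ (p - 1) * \sum_(i < n | P i) g i `^ p.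
Proof.
move=> p_ge1 g_ge0.
rewrite -[\sum_(i < n | P i) g i]big_filter -[\sum_(i < n | P i) g i `^ p]big_filter.
set s := [seq i <- _ | P i].
have size_s : (size s <= n)%N.
  rewrite -[n in (_ <= n)%N]size_enum_ord uniq_leq_size ?filter_uniq ?index_enum_uniq //.
  by move=> i _; rewrite mem_enum.
apply: le_trans (@powR_sum_le _ s g p p_ge1 g_ge0) _.
apply: ler_wpM2r; first by apply: sumr_ge0 => i _; exact: powR_ge0.
by apply: ge0_ler_powR; rewrite ?nnegrE ?subr_ge0 ?ler0n ?ler_nat.
Qed.

End PowerMean.

Lemma contraction_pow_le (R : realType) (Q X : R) (T : nat) :
  1 <= Q -> 0 < X -> Q * ln X <= T%:R -> (1 - Q^-1) ^+ T <= X^-1.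
Proof.
move=> Q_ge1 X_gt0 T_ge; have Q_gt0 : 0 < Q by apply: lt_le_trans Q_ge1.
apply: (@le_trans _ _ (expR (- Q^-1) ^+ T)).
  by rewrite lerXn2r ?nnegrE ?expR_ge0 ?subr_ge0 ?invf_le1 //; exact: expR_ge1Dx.
rewrite -expRM_natr -[X in _ <= X^-1]lnK ?posrE // -expRN ler_expR mulNr lerN2.
by rewrite mulrC ler_pdivlMr // mulrC.
Qed.

Section CostFunction.
Context {R : realType} {E : finType} {q : nat}.
Context {alpha : 'I_q -> R} {sigma : E -> R} {xi : E -> 'I_q -> R}.
Hypothesis alpha_gt1 : forall j, 1 < alpha j.
Hypothesis sigma_ge0 : forall e, 0 <= sigma e.
Hypothesis xi_ge0 : forall e j, 0 <= xi e j.

Local Notation F := (Fcost alpha sigma xi).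

Lemma FcostE e l : (0 < l)%N ->
  F e l = sigma e + \sum_(j < q) xi e j * l%:R `^ alpha j.
Proof. by rewrite /Fcost; case: l. Qed.

Lemma Fcost_ge0 e l : 0 <= F e l.
Proof.
rewrite /Fcost; case: eqP => // _; rewrite addr_ge0 // sumr_ge0 // => j _.
by rewrite mulr_ge0 ?powR_ge0.
Qed.

Lemma Fcost_homo e : {homo F e : l1 l2 / (l1 <= l2)%N >-> l1 <= l2}.
Proof.
move=> [|l1] l2 le_l12; first by rewrite /Fcost /= Fcost_ge0.
rewrite !FcostE ?(leq_trans _ le_l12) // lerD2l ler_sum // => j _.
rewrite ler_wpM2l // ge0_ler_powR ?nnegrE ?ler0n ?ler_nat //.
exact: le_trans (ltW (alpha_gt1 j)).
Qed.

Lemma Ctot_ge0 {N} (w : 'I_N -> E -> nat) p : 0 <= Ctot alpha sigma xi w p.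
Proof. by rewrite sumr_ge0 // => e _; rewrite Fcost_ge0. Qed.

Context {N : nat} {w : 'I_N -> E -> nat} {amax : R}.
Hypothesis w_ge1 : forall i e, (1 <= w i e)%N.
Hypothesis alpha_le_amax : forall j, alpha j <= amax.
Hypothesis amax_ge1 : 1 <= amax.

Lemma Fcost_load_le e (p : profile E N) :
  F e (load w p e) <= N%:R `^ (amax - 1) * \sum_(i < N | e \in p i) F e (w i e).
Proof.
case: (pickP (fun i => e \in p i)) => [i e_pi|no_user]; last first.
  by rewrite /load big_pred0 // /Fcost eqxx mulr_ge0 ?powR_ge0 ?sumr_ge0 // => i _;
    rewrite Fcost_ge0.
have N_ge1 : (1 <= N%:R :> R) by rewrite ler1n (leq_ltn_trans _ (ltn_ord i)).
have load_gt0 : (0 < load w p e)%N.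
  by rewrite /load (bigD1 i) //= (leq_trans (w_ge1 i e)) ?leq_addr.
(* The fixed cost sigma e is paid once on the left but by every user on the right; the
   power terms come from the power-mean inequality over the at most N users of e. *)
rewrite FcostE // (eq_bigr _ (fun i _ => FcostE e _ (w_ge1 i e))).
rewrite big_split /= mulrDr lerD //.
  have M_ge1 : 1 <= N%:R `^ (amax - 1).
    by have := @ler_powR _ _ N_ge1 0 (amax - 1); rewrite powRr0 subr_ge0; apply.
  have sigma_le : sigma e <= \sum_(k < N | e \in p k) sigma e.
    by rewrite (bigD1 i) //= lerDl sumr_ge0.
  by apply: le_trans sigma_le _; rewrite ler_peMl ?sumr_ge0.
rewrite exchange_big mulr_sumr ler_sum // => j _; rewrite -mulr_sumr mulrCA.
rewrite ler_wpM2l // /load natr_sum.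
apply: le_trans; first by apply: powR_sum_ord_le => [|k]; rewrite ?ler0n ?ltW.
apply: ler_wpM2r; first by apply: sumr_ge0 => k _; exact: powR_ge0.
by apply: ler_powR => //; rewrite lerD2r.
Qed.

Lemma sum_Fcost_weight_le e (p : profile E N) :
  \sum_(i < N | e \in p i) F e (w i e) <= N%:R * F e (load w p e).
Proof.
apply: (@le_trans _ _ (\sum_(i < N | e \in p i) F e (load w p e))).
  by apply: ler_sum => i e_pi; rewrite Fcost_homo // /load (bigD1 i) //= leq_addr.
apply: (@le_trans _ _ (\sum_(i < N) F e (load w p e))).
  by rewrite big_mkcond ler_sum // => i _; case: ifP; rewrite ?Fcost_ge0.
by rewrite sumr_const card_ord mulr_natl.
Qed.

Lemma Ctot_le_of_oracle (rho : R) (p0 p : profile E N) : 0 <= rho ->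
  (forall i, \sum_(e in p0 i) F e (w i e) <= rho * \sum_(e in p i) F e (w i e)) ->
  Ctot alpha sigma xi w p0 <= rho * N%:R `^ amax * Ctot alpha sigma xi w p.
Proof.
(* Tolls F e (w i e) ignore the other users of e: Fcost_load_le loses N^(amax-1) on p0,
   sum_Fcost_weight_le loses N on p. *)
move=> rho_ge0 oracle; set M := N%:R `^ (amax - 1).
have sum_users (p' : profile E N) (G : 'I_N -> E -> R) :
    \sum_(e : E) \sum_(i < N | e \in p' i) G i e = \sum_(i < N) \sum_(e in p' i) G i e.
  by rewrite (exchange_big_dep xpredT).
have M_ge0 : 0 <= M by exact: powR_ge0.
apply: (@le_trans _ _ (M * \sum_(i < N) \sum_(e in p0 i) F e (w i e))).
  by rewrite -sum_users mulr_sumr ler_sum // => e _; exact: Fcost_load_le.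
have -> : rho * N%:R `^ amax * Ctot alpha sigma xi w p =
          M * (rho * \sum_(e : E) N%:R * F e (load w p e)).
  rewrite -mulr_sumr /Ctot -(mulr_powRB1 _ (lt_le_trans ltr01 amax_ge1)) ?ler0n //.
  by rewrite -/M; ring.
apply: ler_wpM2l => //.
apply: (@le_trans _ _ (\sum_(i < N) rho * \sum_(e in p i) F e (w i e))).
  by apply: ler_sum => i _; exact: oracle.
rewrite -[X in X <= _]mulr_sumr -sum_users; apply: ler_wpM2l => //.
by apply: ler_sum => e _; exact: sum_Fcost_weight_le.
Qed.

Lemma ABRD_init_cost_le {P} {ft : 'I_N -> E -> profile E N -> R} {rho eps1 T ps br tend}
    {pstar : profile E N} :
  0 <= rho -> ABRD_run P w F ft rho eps1 T ps br tend -> valid P pstar ->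
  Ctot alpha sigma xi w (ps 0%N) <= rho * N%:R `^ amax * Ctot alpha sigma xi w pstar.
Proof.
move=> rho_ge0 [init _ _ _] pstar_valid; apply: Ctot_le_of_oracle => // i.
exact: (init i).2 _ (pstar_valid i).
Qed.

End CostFunction.

Section Profiles.
Context {E : finType} {N : nat}.

Lemma upd_id (p : profile E N) i : upd p i (p i) = p.
Proof. by apply/ffunP => k; rewrite ffunE; case: eqP => [->|]. Qed.

Lemma upd_other (p : profile E N) i r k : k != i -> p k = upd p i r k.
Proof. by move=> ki; rewrite ffunE (negbTE ki). Qed.

Lemma valid_upd {P} {p : profile E N} {i r} : valid P p -> r \in P i -> valid P (upd p i r).
Proof. by move=> vp r_Pi k; rewrite ffunE; case: eqP => [->|]. Qed.

End Profiles.

Lemma is_CSM_sum_Cind {R : realType} {E : finType} {N : nat} {P w F}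
    {f : 'I_N -> E -> profile E N -> R} :
  is_CSM P w F f -> forall p, valid P p -> \sum_(i < N) Cind f i p = \sum_e F e (load w p e).
Proof.
by case=> _ sum_f _ _ p vp; rewrite exchange_big; apply: eq_bigr => e _; exact: sum_f.
Qed.

Definition approx_best_responses {R : realType} {E : finType} {N : nat}
    (P : 'I_N -> {set {set E}}) (ft : 'I_N -> E -> profile E N -> R) (rho : R)
    (p : profile E N) (b : 'I_N -> {set E}) : Prop :=
  forall i, b i \in P i /\
    forall r, r \in P i -> Cind ft i (upd p i (b i)) <= rho * Cind ft i (upd p i r).

Definition improvement {R : realType} {E : finType} {N : nat}
    (ft : 'I_N -> E -> profile E N -> R) (eps1 : R)
    (p : profile E N) (b : 'I_N -> {set E}) (i : 'I_N) : R :=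
  Cind ft i p - eps1 * Cind ft i (upd p i (b i)).

Section Game.
Context {R : realType} {E : finType} {N : nat} {P : 'I_N -> {set {set E}}}.
Context {f ft : 'I_N -> E -> profile E N -> R} {C : profile E N -> R}.
Context {rho eps lam mu : R}.
Hypothesis rho_ge0 : 0 <= rho.
Hypothesis eps_gt0 : 0 < eps.
Hypothesis eps_lt1 : eps < 1.
Hypothesis lam_ge0 : 0 <= lam.
Hypothesis C_ge0 : forall p, 0 <= C p.
Hypothesis share_sum : forall p, valid P p -> \sum_(i < N) Cind f i p = C p.
Hypothesis ft_approx : forall i e p, valid P p ->
  (1 - eps) * f i e p <= ft i e p /\ ft i e p <= (1 + eps) * f i e p.
Hypothesis f_smooth : smooth P C f lam mu.

Local Notation eps1 := ((1 + eps) / (1 - eps)).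
Local Notation K := (1 - rho * eps1 ^+ 2 * mu).
Local Notation delta := (improvement ft eps1).
Local Notation approx_best_responses := (approx_best_responses P ft rho).

Lemma eps1K : eps1 * (1 - eps) = 1 + eps.
Proof. by rewrite divfK // subr_eq0 gt_eqF. Qed.

Lemma eps1_ge1 : 1 <= eps1.
Proof.
rewrite ler_pdivlMr ?subr_gt0 // mul1r lerD2l.
by rewrite (le_trans _ (ltW eps_gt0)) // oppr_le0 ltW.
Qed.

Lemma eps1_gt0 : 0 < eps1.
Proof. by apply: divr_gt0; [apply: addr_gt0 | rewrite subr_gt0]. Qed.

Lemma Cind_approx i {p} : valid P p ->
  (1 - eps) * Cind f i p <= Cind ft i p /\ Cind ft i p <= (1 + eps) * Cind f i p.
Proof.
by move=> vp; rewrite /Cind !mulr_sumr; split; apply: ler_sum => e _; case: (ft_approx i e p vp).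
Qed.

Lemma smooth_lam_mu_ge1 {p} : valid P p -> 0 < C p -> 1 <= lam + mu.
Proof.
move=> vp Cp_gt0; have := f_smooth p p vp vp.
under eq_bigr do rewrite upd_id.
by rewrite share_sum // -mulrDl -[X in X <= _]mul1r ler_pM2r.
Qed.

Lemma sum_improvement_ge {p p' b} : valid P p -> valid P p' -> approx_best_responses p b ->
  (1 - eps) * (K * C p - rho * eps1 ^+ 2 * lam * C p') <= \sum_(i < N) delta p b i.
Proof.
move=> vp vp' br; rewrite /improvement sumrB -mulr_sumr.
have ft_ge : (1 - eps) * C p <= \sum_(i < N) Cind ft i p.
  by rewrite -share_sum // mulr_sumr ler_sum // => i _; case: (Cind_approx i vp).
have ft_br_le : \sum_(i < N) Cind ft i (upd p i (b i)) <=
                rho * (1 + eps) * (lam * C p' + mu * C p).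
  (* Compare each best response with the deviation to p' i, then apply smoothness. *)
  apply: (@le_trans _ _ (\sum_(i < N) rho * ((1 + eps) * Cind f i (upd p i (p' i))))).
    apply: ler_sum => i _; apply: le_trans ((br i).2 _ (vp' i)) _.
    by apply: ler_wpM2l => //; case: (Cind_approx i (valid_upd vp (vp' i))).
  rewrite -mulr_sumr -mulr_sumr mulrA; apply: ler_wpM2l; last exact: f_smooth p p' vp vp'.
  by rewrite mulr_ge0 // addr_ge0 // ltW.
have -> : (1 - eps) * (K * C p - rho * eps1 ^+ 2 * lam * C p') =
          (1 - eps) * C p - eps1 * (rho * (1 + eps) * (lam * C p' + mu * C p)).
  by field; rewrite subr_eq0 gt_eqF.
exact: lerB ft_ge (ler_wpM2l (ltW eps1_gt0) ft_br_le).
Qed.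

Lemma sum_improvement_gt0 {p p' b} : valid P p -> valid P p' -> approx_best_responses p b ->
  2 * rho * eps1 ^+ 2 * lam * C p' < K * C p -> 0 < \sum_(i < N) delta p b i.
Proof.
move=> vp vp' br far; apply: lt_le_trans (sum_improvement_ge vp vp' br).
have z_ge0 : 0 <= rho * eps1 ^+ 2 * lam * C p'.
  exact: mulr_ge0 (mulr_ge0 (mulr_ge0 rho_ge0 (exprn_ge0 2 (ltW eps1_gt0))) lam_ge0) _.
rewrite mulr_gt0 ?subr_gt0 //; lra.
Qed.

Context {Phi : profile E N -> R} {A B : R}.
Hypothesis Phi_potential : is_potential P f Phi.
Hypothesis Phi_bounded : bounded_potential P C Phi A B.

Lemma bounded_potential_A_gt0 : 0 < A.
Proof. by case: Phi_bounded => A_ge1 _; exact: lt_le_trans ltr01 A_ge1. Qed.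

Lemma potential_le_cost {p} : valid P p -> Phi p <= A * C p.
Proof.
move=> vp; have [_ [_ /(_ p vp) [Phi_le _]]] := Phi_bounded.
by rewrite mulrC -ler_pdivrMr // bounded_potential_A_gt0.
Qed.

Lemma improvement_le_potential_drop {p b j} : valid P p -> b j \in P j ->
  delta p b j <= (1 + eps) * (Phi p - Phi (upd p j (b j))).
Proof.
move=> vp bj; set p' := upd p j (b j); have vp' : valid P p' := valid_upd vp bj.
have drop := Phi_potential.2 j p p' vp vp' (upd_other p j (b j)).
have [_ ft_le] := Cind_approx j vp; have [ft_ge _] := Cind_approx j vp'.
have := ler_wpM2l (ltW eps1_gt0) ft_ge; rewrite mulrA eps1K.
have -> : Phi p - Phi p' = Cind f j p - Cind f j p' by rewrite -opprB drop opprB.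
rewrite /improvement -/p'; lra.
Qed.

Hypothesis K_gt0 : 0 < K.
Hypothesis N_gt0 : (0 < N)%N.

Local Notation Q := (2 * eps1 * N%:R * A / K).

Lemma potential_contract {p p' b j} :
  valid P p -> valid P p' -> approx_best_responses p b ->
  (\sum_(i < N) delta p b i) / N%:R <= delta p b j ->
  2 * rho * eps1 ^+ 2 * lam * C p' < K * C p ->
  Phi (upd p j (b j)) <= (1 - Q^-1) * Phi p.
Proof.
move=> vp vp' br avg far.
have em_gt0 : 0 < 1 - eps by rewrite subr_gt0.
have D_ge := sum_improvement_ge vp vp' br.
have drop := improvement_le_potential_drop vp (br j).1.
move: avg; rewrite ler_pdivrMr ?ltr0n // => avg.
set D := \sum_(i < N) _ in D_ge avg; set d := Phi p - _ in drop.
set k := K * C p in far D_ge; set z := rho * eps1 ^+ 2 * lam * C p' in D_ge.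
have half : (1 - eps) * k <= 2 * D.
  have k_le : k <= 2 * (k - z) by move: far; rewrite /z !mulrA; lra.
  apply: le_trans (ler_wpM2l (ltW em_gt0) k_le) _.
  by rewrite mulrCA; apply: ler_wpM2l.
have k_le : k <= 2 * N%:R * eps1 * d.
  rewrite -(ler_pM2l em_gt0); apply: le_trans half _.
  have -> : (1 - eps) * (2 * N%:R * eps1 * d) = 2 * (N%:R * (eps1 * (1 - eps) * d)).
    by ring.
  rewrite eps1K; apply: ler_wpM2l => //.
  by apply: le_trans avg _; rewrite [_ * N%:R]mulrC; apply: ler_wpM2l.
have KPhi_le : K * Phi p <= A * (2 * N%:R * eps1 * d).
  apply: le_trans (ler_wpM2l (ltW K_gt0) (potential_le_cost vp)) _.
  by rewrite mulrCA; apply: ler_wpM2l => //; exact/ltW/bounded_potential_A_gt0.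
have Qinv_le : Q^-1 * Phi p <= d.
  have den_gt0 : 0 < 2 * eps1 * N%:R * A.
    by rewrite mulr_gt0 ?bounded_potential_A_gt0 // mulr_gt0 ?ltr0n // mulr_gt0 // eps1_gt0.
  rewrite invf_div mulrAC ler_pdivrMr //.
  have -> : d * (2 * eps1 * N%:R * A) = A * (2 * N%:R * eps1 * d) by ring.
  exact: KPhi_le.
by move: Qinv_le; rewrite /d mulrBl mul1r; lra.
Qed.

Hypothesis mu_ge0 : 0 <= mu.

Lemma Q_ge1 : 1 <= Q.
Proof.
have K_le1 : K <= 1.
  by rewrite gerBl; exact: mulr_ge0 (mulr_ge0 rho_ge0 (exprn_ge0 2 (ltW eps1_gt0))) mu_ge0.
rewrite ler_pdivlMr // mul1r; apply: le_trans K_le1 _.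
apply: mulr_ege1; last exact: Phi_bounded.1.
apply: mulr_ege1; last by rewrite ler1n.
by apply: mulr_ege1; [rewrite ler1n | exact: eps1_ge1].
Qed.

Context {w : 'I_N -> E -> nat} {F : E -> nat -> R} {T : nat}.
Context {ps : nat -> profile E N} {br : nat -> 'I_N -> {set E}} {tend : nat}.
Hypothesis run : ABRD_run P w F ft rho eps1 T ps br tend.

Lemma ABRD_valid {t} : (t <= tend)%N -> valid P (ps t).
Proof.
case: run => init _ step _; elim: t => [_ i | t IH lt_t]; first by case: (init i).
have [br_t [[j [_ _ ->]] | [_ [-> _]]]] := step t lt_t; last exact: IH (ltnW lt_t).
exact: valid_upd (IH (ltnW lt_t)) (br_t j).1.
Qed.

Context {pstar : profile E N}.
Hypothesis pstar_valid : valid P pstar.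

Context {M : R}.
Hypothesis M_gt0 : 0 < M.
Hypothesis init_cost_le : C (ps 0) <= rho * M * C pstar.
Hypothesis T_ge : Q * ln (A * B * M) <= T%:R.

Section FarFromOptimum.
Hypothesis far : forall t, (t <= tend)%N ->
  2 * rho * eps1 ^+ 2 * lam * C pstar < K * C (ps t).

Lemma ABRD_improvable {t} : (t < tend)%N -> ~ (forall i, delta (ps t) (br t) i <= 0).
Proof.
move=> lt_t stop; case: run => _ _ step _.
have no_gain : \sum_(i < N) delta (ps t) (br t) i <= 0 by apply: sumr_le0 => i _.
have vt := ABRD_valid (ltnW lt_t).
have := sum_improvement_gt0 vt pstar_valid (step t lt_t).1 (far t (ltnW lt_t)).
by rewrite ltNge no_gain.
Qed.

Lemma ABRD_full_length : tend = T.
Proof.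
case: run => _ le_T _ early; case: (ltnP tend T) => [lt_T|ge_T].
  have [t [t_end stop]] := early lt_T.
  by case: (ABRD_improvable (_ : (t < tend)%N) stop); rewrite -t_end.
by apply/eqP; rewrite eqn_leq le_T ge_T.
Qed.

Lemma ABRD_potential_decay t : (t <= tend)%N ->
  Phi (ps t) <= (1 - Q^-1) ^+ t * Phi (ps 0).
Proof.
elim: t => [|t IH lt_t]; first by rewrite expr0 mul1r.
have vt := ABRD_valid (ltnW lt_t).
case: run => _ _ step _; have [br_t [[j [_ avg ->]] | [stop _]]] := step t lt_t; last first.
  by case: (ABRD_improvable lt_t stop).
apply: le_trans (potential_contract vt pstar_valid br_t avg (far t (ltnW lt_t))) _.
rewrite (exprS (1 - Q^-1)) -(mulrA (1 - Q^-1)); apply: ler_wpM2l; last exact: IH (ltnW lt_t).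
by rewrite subr_ge0 invf_le1 ?Q_ge1 // (lt_le_trans ltr01 Q_ge1).
Qed.

Lemma ABRD_last_cost_le : C (ps T) <= rho * C pstar.
Proof.
have le_T : (T <= tend)%N by rewrite ABRD_full_length.
have [A_ge1 [B_ge1 Phi_C]] := Phi_bounded.
have A_gt0 := bounded_potential_A_gt0; have B_gt0 := lt_le_trans ltr01 B_ge1.
have v0 : valid P (ps 0) := ABRD_valid (leq0n _).
have Phi0_le : Phi (ps 0) <= A * (rho * M * C pstar).
  by apply: le_trans (potential_le_cost v0) _; apply: ler_wpM2l => //; exact: ltW.
have decay_ge0 : 0 <= (1 - Q^-1) ^+ T.
  by rewrite exprn_ge0 // subr_ge0 invf_le1 ?Q_ge1 // (lt_le_trans ltr01 Q_ge1).
have -> : rho * C pstar = B * ((A * B * M)^-1 * (A * (rho * M * C pstar))).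
  by field; rewrite !gt_eqF.
apply: le_trans (Phi_C _ (ABRD_valid le_T)).2 _; apply: ler_wpM2l; first exact: ltW.
apply: le_trans (ABRD_potential_decay T le_T) _.
apply: ler_pM => //; first exact/ltW/(Phi_potential.1 _ v0).
by apply: contraction_pow_le Q_ge1 _ T_ge; rewrite !mulr_gt0.
Qed.

End FarFromOptimum.

Hypothesis rho_ge1 : 1 <= rho.

Lemma ABRD_cost_le {tstar} : (tstar <= tend)%N ->
  (forall t, (t <= tend)%N -> C (ps tstar) <= C (ps t)) ->
  C (ps tstar) <= 2 * rho * eps1 ^+ 2 * lam / K * C pstar.
Proof.
move=> le_tstar tstar_min; rewrite leNgt; apply/negP => far_tstar.
have far t : (t <= tend)%N -> 2 * rho * eps1 ^+ 2 * lam * C pstar < K * C (ps t).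
  move=> le_t; rewrite [K * _]mulrC -ltr_pdivrMr // mulrAC.
  exact: lt_le_trans far_tstar (tstar_min t le_t).
have lam_mu_ge1 : 1 <= lam + mu.
  apply: (smooth_lam_mu_ge1 (ABRD_valid le_tstar)); apply: le_lt_trans far_tstar.
  rewrite mulr_ge0 // divr_ge0 ?(ltW K_gt0) //.
  exact: mulr_ge0 (mulr_ge0 (mulr_ge0 (ler0n _ 2) rho_ge0) (exprn_ge0 2 (ltW eps1_gt0))) lam_ge0.
have K_le : K <= 2 * eps1 ^+ 2 * lam.
  have eps1_sq_ge1 : 1 <= eps1 ^+ 2 := exprn_ege1 2 eps1_ge1.
  have : mu <= rho * eps1 ^+ 2 * mu by rewrite ler_peMl // mulr_ege1.
  have : lam <= eps1 ^+ 2 * lam by rewrite ler_peMl.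
  have := lam_ge0; lra.
(* ps T would be far from optimal, yet it costs at most rho C pstar. *)
have le_T : (T <= tend)%N by rewrite (ABRD_full_length far).
move: (far T le_T); rewrite ltNge => /negP; apply.
have -> : 2 * rho * eps1 ^+ 2 * lam * C pstar = 2 * eps1 ^+ 2 * lam * (rho * C pstar).
  by ring.
apply: le_trans (ler_wpM2l (ltW K_gt0) (ABRD_last_cost_le far)) _.
by apply: ler_wpM2r => //; rewrite mulr_ge0.
Qed.

End Game.

Theorem theorem5p3 (R : realType) (E : finType) (N : nat)
  (P : 'I_N -> {set {set E}}) (w : 'I_N -> E -> nat)
  (q : nat) (alpha : 'I_q -> R) (sigma : E -> R) (xi : E -> 'I_q -> R)
  (rho eps lam mu A B : R)
  (f ft : 'I_N -> E -> profile E N -> R) (Phi : profile E N -> R)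
  (T : nat) (ps : nat -> profile E N) (br : nat -> 'I_N -> {set E}) (tend : nat) :
  let F := Fcost alpha sigma xi in
  let C := Ctot alpha sigma xi w in
  let eps1 := (1 + eps) / (1 - eps) in
  let Q := 2 * eps1 * N%:R * A / (1 - rho * eps1 ^+ 2 * mu) in
  let amax := \big[Num.max/1]_(j < q) alpha j in
  (0 < N)%N ->
  (forall i, exists r, r \in P i) ->
  (forall i e, (1 <= w i e)%N) ->
  (0 < q)%N ->
  (forall j, 1 < alpha j) ->
  (forall e, 0 <= sigma e) ->
  (forall e j, 0 <= xi e j) ->
  (forall e, exists j, 0 < xi e j) ->
  1 <= rho ->
  0 < eps -> eps < 1 ->
  is_CSM P w F f ->
  (forall i e p, valid P p ->
     (1 - eps) * f i e p <= ft i e p /\ ft i e p <= (1 + eps) * f i e p) ->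
  is_potential P f Phi ->
  bounded_potential P C Phi A B ->
  0 < lam -> 0 < mu -> mu < 1 ->
  smooth P C f lam mu ->
  mu < 1 / (rho * eps1 ^+ 2) ->
  (T%:Z = Num.ceil (Q * ln (A * B * (N%:R `^ amax)))) ->
  ABRD_run P w F ft rho eps1 T ps br tend ->
  forall tstar, (tstar <= tend)%N ->
  (forall t, (t <= tend)%N -> C (ps tstar) <= C (ps t)) ->
  forall pstar, valid P pstar -> (forall p, valid P p -> C pstar <= C p) ->
  C (ps tstar) <= 2 * rho * eps1 ^+ 2 * lam / (1 - rho * eps1 ^+ 2 * mu) * C pstar.
Proof.
move=> F C eps1 Q amax N_gt0 _ w_ge1 _ alpha_gt1 sigma_ge0 xi_ge0 _ rho_ge1 eps_gt0 eps_lt1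
  csm ft_approx pot bnd lam_gt0 mu_gt0 _ f_smooth mu_small T_ceil run tstar le_tstar
  tstar_min pstar pstar_valid _.
(* The bound holds for every valid pstar, optimal or not. *)
have rho_ge0 : 0 <= rho := le_trans ler01 rho_ge1.
have alpha_le_amax j : alpha j <= amax := le_bigmax _ _ j.
have amax_ge1 : 1 <= amax := bigmax_ge_id _ _ _ _.
have K_gt0 : 0 < 1 - rho * eps1 ^+ 2 * mu.
  have c_gt0 : 0 < rho * eps1 ^+ 2.
    by rewrite mulr_gt0 ?exprn_gt0 ?(lt_le_trans ltr01 rho_ge1) //; exact: eps1_gt0.
  by move: mu_small; rewrite subr_gt0 div1r -ltr_pdivlMl // mulr1.
have T_ge : Q * ln (A * B * N%:R `^ amax) <= T%:R.
  by rewrite -[T%:R]/(T%:Z%:~R : R) T_ceil ceil_ge.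
have M_gt0 : 0 < N%:R `^ amax :> R by rewrite powR_gt0 // ltr0n.
have init_le := ABRD_init_cost_le alpha_gt1 sigma_ge0 xi_ge0 w_ge1 alpha_le_amax amax_ge1
  rho_ge0 run pstar_valid.
exact: (ABRD_cost_le rho_ge0 eps_gt0 eps_lt1 (ltW lam_gt0) (Ctot_ge0 sigma_ge0 xi_ge0 w)
  (is_CSM_sum_Cind csm) ft_approx f_smooth pot bnd K_gt0 N_gt0 (ltW mu_gt0) run pstar_valid
  M_gt0 init_le T_ge rho_ge1 le_tstar tstar_min).
Qed.
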